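(* Every filter $\mathcal{F}$ on $\omega$ (viewed as a subspace of $2^\omega$) is strongly homogeneous.
   Context: A filter on $\omega$ is $\mathcal{F}\subseteq\mathcal{P}(\omega)$ with $\varnothing\notin\mathcal{F}$, $\omega\in\mathcal{F}$, closed under finite modifications (if $x\in\mathcal{F}$ and $y$ differs from $x$ by a finite set then $y\in\mathcal{F}$), upward-closed, and closed under finite intersections; it is identified via characteristic functions with a subspace of $2^\omega$. A space $X$ is strongly homogeneous if every non-empty clopen subspace of $X$ is homeomorphic to $X$. *)

(* Cantor space 2^omega is represented as nat -> bool,
   subspaces as predicates on nat -> bool. *)

Definition cantor := nat -> bool.

Definition agree (n : nat) (x y : cantor) : Prop :=
  forall k, k < n -> x k = y k.

Definition fin_diff (x y : cantor) : Prop :=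
  exists N, forall n, N <= n -> x n = y n.

(* A filter on omega, identified via characteristic functions. *)
Definition is_filter (F : cantor -> Prop) : Prop :=
  ~ F (fun _ => false) /\
  F (fun _ => true) /\
  (forall x y, F x -> fin_diff x y -> F y) /\
  (forall x y, F x -> (forall n, x n = true -> y n = true) -> F y) /\
  (forall x y, F x -> F y -> F (fun n => andb (x n) (y n))).

Definition subset (A B : cantor -> Prop) : Prop := forall x, A x -> B x.

Definition open_in (X U : cantor -> Prop) : Prop :=
  forall x, U x -> exists n, forall y, X y -> agree n x y -> U y.

Definition clopen_in (X U : cantor -> Prop) : Prop :=
  subset U X /\ open_in X U /\ open_in X (fun y => X y /\ ~ U y).

Definition continuous_on (A : cantor -> Prop) (f : cantor -> cantor) : Prop :=
  forall x, A x -> forall m, exists n, forall y, A y -> agree n x y ->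
    agree m (f x) (f y).

Definition homeomorphic (A B : cantor -> Prop) : Prop :=
  exists (f g : cantor -> cantor),
    (forall x, A x -> B (f x)) /\
    (forall y, B y -> A (g y)) /\
    (forall x, A x -> forall n, g (f x) n = x n) /\
    (forall y, B y -> forall n, f (g y) n = y n) /\
    continuous_on A f /\ continuous_on B g.

Definition strongly_homogeneous (X : cantor -> Prop) : Prop :=
  forall U, clopen_in X U -> (exists x, U x) -> homeomorphic U X.

From Stdlib Require Import Arith Bool Lia Classical ClassicalEpsilon FunctionalExtensionality.
From Stdlib Require ConstructiveEpsilon.

(* Every member of a filter F contains a 1, so F is partitioned into the clopen
   cylinders "first 1 at position k"; and every cylinder of F is homeomorphic
   to F, because shifting along an infinite set disjoint from some member of F
   (or along all of omega when every member of F is cofinite) frees any finite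
   prefix without leaving F. Given a non-empty clopen U, pick a cylinder A
   inside U and let V = U \ A. Splitting each of the countably many copies of F
   inside F into a copy of V and a copy of F \ V, a Hilbert-hotel shift of the
   copies of V gives F = V' + F' with V' homeomorphic to V and F' to F; hence
   F is homeomorphic to V + A = U. *)

Definition is_homeo (A B : cantor -> Prop) (f g : cantor -> cantor) : Prop :=
  (forall x, A x -> B (f x)) /\
  (forall y, B y -> A (g y)) /\
  (forall x, A x -> forall n, g (f x) n = x n) /\
  (forall y, B y -> forall n, f (g y) n = y n) /\
  continuous_on A f /\ continuous_on B g.

Definition cylinder (X : cantor -> Prop) (n : nat) (s : cantor) : cantor -> Prop :=
  fun x => X x /\ agree n s x.

Definition clopen_partition {I : Type} (X : cantor -> Prop) (P : I -> cantor -> Prop) :=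
  (forall i, subset (P i) X) /\
  (forall x, X x -> exists i, P i x) /\
  (forall i j x, P i x -> P j x -> i = j) /\
  (forall i, open_in X (P i)).

Lemma agree_sym n x y : agree n x y -> agree n y x.
Proof. intros H k Hk. symmetry. auto. Qed.

Lemma agree_trans n x y z : agree n x y -> agree n y z -> agree n x z.
Proof. intros H1 H2 k Hk. rewrite H1; auto. Qed.

Lemma agree_weaken n m x y : m <= n -> agree n x y -> agree m x y.
Proof. intros Hm H k Hk. apply H. lia. Qed.

(** * Homeomorphisms between subspaces *)

Lemma continuous_on_comp A B f g : (forall x, A x -> B (f x)) ->
  continuous_on A f -> continuous_on B g -> continuous_on A (fun x => g (f x)).
Proof.
  intros Hm Hf Hg x Hx m.
  destruct (Hg (f x) (Hm x Hx) m) as [n1 Hn1].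
  destruct (Hf x Hx n1) as [n2 Hn2].
  exists n2. auto.
Qed.

Lemma continuous_on_subset A B f : subset B A -> continuous_on A f -> continuous_on B f.
Proof. intros Hs H x Hx m. destruct (H x (Hs x Hx) m) as [n Hn]. eauto. Qed.

Lemma homeomorphic_refl A : homeomorphic A A.
Proof.
  exists (fun x => x), (fun x => x).
  repeat split; auto; intros x _ m; exists m; auto.
Qed.

Lemma is_homeo_sym A B f g : is_homeo A B f g -> is_homeo B A g f.
Proof. intros (H1 & H2 & H3 & H4 & H5 & H6). repeat split; assumption. Qed.

Lemma homeomorphic_sym A B : homeomorphic A B -> homeomorphic B A.
Proof. intros (f & g & H). exists g, f. exact (is_homeo_sym _ _ _ _ H). Qed.

Lemma homeomorphic_trans A B C :
  homeomorphic A B -> homeomorphic B C -> homeomorphic A C.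
Proof.
  intros (f1 & g1 & H11 & H12 & H13 & H14 & H15 & H16)
         (f2 & g2 & H21 & H22 & H23 & H24 & H25 & H26).
  exists (fun x => f2 (f1 x)), (fun y => g1 (g2 y)).
  repeat split; auto.
  - intros x Hx n.
    rewrite (functional_extensionality _ _ (H23 (f1 x) (H11 x Hx))). auto.
  - intros y Hy n.
    rewrite (functional_extensionality _ _ (H14 (g2 y) (H22 y Hy))). auto.
  - apply (continuous_on_comp A B); auto.
  - apply (continuous_on_comp C B); auto.
Qed.

Lemma is_homeo_restrict X Y Z f g : is_homeo X Y f g -> subset Z X ->
  is_homeo Z (fun y => Y y /\ Z (g y)) f g.
Proof.
  intros (H1 & H2 & H3 & H4 & H5 & H6) HZ.
  repeat split; auto.
  - replace (g (f x)) with x by (apply functional_extensionality; symmetry; auto).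
    assumption.
  - intros y [_ Hy]. assumption.
  - intros y [Hy _]. auto.
  - exact (continuous_on_subset X Z f HZ H5).
  - apply (continuous_on_subset Y); auto. intros y [Hy _]. assumption.
Qed.

Lemma homeomorphic_choice (I : Type) (X Y : I -> cantor -> Prop) :
  (forall i, homeomorphic (X i) (Y i)) ->
  exists f g : I -> cantor -> cantor, forall i, is_homeo (X i) (Y i) (f i) (g i).
Proof.
  intros H.
  assert (Hf : forall i, {f : cantor -> cantor | exists g, is_homeo (X i) (Y i) f g})
    by (intro i; exact (constructive_indefinite_description _ (H i))).
  assert (Hg : forall i, {g : cantor -> cantor | is_homeo (X i) (Y i) (proj1_sig (Hf i)) g})
    by (intro i; exact (constructive_indefinite_description _ (proj2_sig (Hf i)))).
  exists (fun i => proj1_sig (Hf i)), (fun i => proj1_sig (Hg i)).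
  intro i. exact (proj2_sig (Hg i)).
Qed.

(** * Open and clopen subsets of subspaces *)

Lemma open_in_subspace X Y S : subset Y X -> open_in X S -> open_in Y S.
Proof. intros HYX H x Hx. destruct (H x Hx) as [n Hn]. eauto. Qed.

Lemma open_in_trans X Y S : subset S Y -> open_in X Y -> open_in Y S -> open_in X S.
Proof.
  intros HSY HY HS x Hx.
  destruct (HS x Hx) as [n1 Hn1].
  destruct (HY x (HSY x Hx)) as [n2 Hn2].
  exists (max n1 n2). intros y Hy Hxy.
  apply Hn1; [apply Hn2; auto |]; apply (agree_weaken (max n1 n2)); auto; lia.
Qed.

Lemma open_in_preimage X Y f g Q : is_homeo X Y f g -> open_in X Q ->
  open_in Y (fun y => Y y /\ Q (g y)).
Proof.
  intros (_ & HgY & _ & _ & _ & Hg) HQ y [Hy Hq].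
  destruct (HQ _ Hq) as [n1 Hn1].
  destruct (Hg y Hy n1) as [n2 Hn2].
  exists n2. intros z Hz Hyz. split; [exact Hz | apply Hn1; auto].
Qed.

Lemma clopen_in_restrict X Y S : subset S Y -> subset Y X -> clopen_in X S ->
  clopen_in Y S.
Proof.
  intros HSY HYX (_ & HS & HSc). repeat split.
  - exact HSY.
  - exact (open_in_subspace X Y S HYX HS).
  - intros x [Hx Hnx]. destruct (HSc x (conj (HYX x Hx) Hnx)) as [n Hn].
    exists n. intros y Hy Hxy. split; [exact Hy | apply (Hn y (HYX y Hy) Hxy)].
Qed.

Lemma clopen_in_compl X S : clopen_in X S -> clopen_in X (fun x => X x /\ ~ S x).
Proof.
  intros (HSX & HS & HSc). repeat split.
  - intros x [Hx _]. exact Hx.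
  - exact HSc.
  - intros x [Hx Hnx].
    assert (Hs : S x) by (apply NNPP; auto).
    destruct (HS x Hs) as [n Hn].
    exists n. intros y Hy Hxy. split; [exact Hy | intros [_ Hny]; auto].
Qed.

Lemma clopen_in_trans X Y S : clopen_in X Y -> clopen_in Y S -> clopen_in X S.
Proof.
  intros (HYX & HY & HYc) (HSY & HS & HSc). repeat split.
  - intros x Hx. auto.
  - exact (open_in_trans X Y S HSY HY HS).
  - intros x [Hx Hnx]. destruct (classic (Y x)) as [Hyx | Hnyx].
    + destruct (open_in_trans X Y _ (fun z Hz => proj1 Hz) HY HSc x (conj Hyx Hnx))
        as [n Hn].
      exists n. intros y Hy Hxy. split; [exact Hy | apply (Hn y Hy Hxy)].
    + destruct (HYc x (conj Hx Hnyx)) as [n Hn].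
      exists n. intros y Hy Hxy. split; [exact Hy |].
      intros Hs. apply (proj2 (Hn y Hy Hxy)). auto.
Qed.

Lemma clopen_in_preimage X Y f g S : is_homeo X Y f g -> clopen_in X S ->
  clopen_in Y (fun y => Y y /\ S (g y)).
Proof.
  intros Hfg (HSX & HS & HSc). repeat split.
  - intros y [Hy _]. exact Hy.
  - exact (open_in_preimage X Y f g S Hfg HS).
  - intros y [Hy Hny].
    assert (Hgy : X (g y)) by (apply Hfg; exact Hy).
    destruct (open_in_preimage X Y f g _ Hfg HSc y
                (conj Hy (conj Hgy (fun Hs => Hny (conj Hy Hs))))) as [n Hn].
    exists n. intros z Hz Hyz. destruct (Hn z Hz Hyz) as [_ [_ Hns]].
    split; [exact Hz | intros [_ Hs]; auto].
Qed.

Lemma clopen_in_cylinder X n s : clopen_in X (cylinder X n s).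
Proof.
  repeat split.
  - intros x [Hx _]. exact Hx.
  - intros x [_ Hsx]. exists n. intros y Hy Hxy. split; [exact Hy |].
    exact (agree_trans n s x y Hsx Hxy).
  - intros x [Hx Hnx]. exists n. intros y Hy Hxy. split; [exact Hy |].
    intros [_ Hsy]. apply Hnx. split; [exact Hx |].
    exact (agree_trans n s y x Hsy (agree_sym n x y Hxy)).
Qed.

(** * Gluing along clopen partitions *)

Lemma clopen_partition_piece {I} X (P : I -> cantor -> Prop) i :
  clopen_partition X P -> clopen_in X (P i).
Proof.
  intros (Hsub & Hcov & Hdisj & Hopen). repeat split.
  - apply Hsub.
  - apply Hopen.
  - intros x [Hx Hnx]. destruct (Hcov x Hx) as [j Hj].
    destruct (Hopen j x Hj) as [n Hn].
    exists n. intros y Hy Hxy. split; [exact Hy |].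
    intros Hi. apply Hnx. replace i with j; [exact Hj |].
    exact (Hdisj j i y (Hn y Hy Hxy) Hi).
Qed.

Lemma clopen_partition_bool X S S' : clopen_in X S ->
  (forall x, S' x <-> X x /\ ~ S x) ->
  clopen_partition X (fun b : bool => if b then S else S').
Proof.
  intros (HSX & HS & HSc) HS'.
  repeat split.
  - intros [|] x; [apply HSX | intros Hx; apply HS'; exact Hx].
  - intros x Hx. destruct (classic (S x)).
    + exists true. assumption.
    + exists false. apply HS'. auto.
  - intros [|] [|] x; rewrite ?HS'; tauto.
  - intros [|]; [exact HS |].
    intros x Hx. apply HS' in Hx. destruct (HSc x Hx) as [n Hn].
    exists n. intros y Hy Hxy. apply HS'. apply Hn; auto.
Qed.

Lemma clopen_partition_refine {I J} X (P : I -> cantor -> Prop)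
    (Q : I -> J -> cantor -> Prop) :
  clopen_partition X P -> (forall i, clopen_partition (P i) (Q i)) ->
  clopen_partition X (fun ij : I * J => Q (fst ij) (snd ij)).
Proof.
  intros (Hsub & Hcov & Hdisj & Hopen) HQ. repeat split.
  - intros [i j] x Hx. apply (Hsub i). exact (proj1 (HQ i) j x Hx).
  - intros x Hx. destruct (Hcov x Hx) as [i Hi].
    destruct (proj1 (proj2 (HQ i)) x Hi) as [j Hj]. exists (i, j). exact Hj.
  - intros [i j] [i' j'] x Hx Hx'. simpl in *.
    assert (i = i') as <-
      by exact (Hdisj i i' x (proj1 (HQ i) j x Hx) (proj1 (HQ i') j' x Hx')).
    f_equal. exact (proj1 (proj2 (proj2 (HQ i))) j j' x Hx Hx').
  - intros [i j]. apply (open_in_trans X (P i)); [apply (HQ i) | apply Hopen |].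
    exact (proj2 (proj2 (proj2 (HQ i))) j).
Qed.

Lemma clopen_partition_remove {I J} X (P : I -> cantor -> Prop) (i0 : I)
    (sigma : J -> I) :
  clopen_partition X P ->
  (forall j j', sigma j = sigma j' -> j = j') ->
  (forall i, i <> i0 -> exists j, sigma j = i) ->
  (forall j, sigma j <> i0) ->
  clopen_partition (fun x => X x /\ ~ P i0 x) (fun j => P (sigma j)).
Proof.
  intros (Hsub & Hcov & Hdisj & Hopen) Hinj Hsurj Hmiss. split; [| split; [| split]].
  - intros j x Hx. split; [exact (Hsub _ x Hx) |].
    intros Hx0. exact (Hmiss j (Hdisj _ _ x Hx Hx0)).
  - intros x [Hx Hnx]. destruct (Hcov x Hx) as [i Hi].
    destruct (Hsurj i) as [j <-]; [intros ->; contradiction | eauto].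
  - intros j j' x Hx Hx'. apply Hinj. exact (Hdisj _ _ x Hx Hx').
  - intros j. apply (open_in_subspace X); [intros x [Hx _]; exact Hx | apply Hopen].
Qed.

Lemma partition_index {I} (i0 : I) X (P : I -> cantor -> Prop) :
  clopen_partition X P ->
  exists ix : cantor -> I, (forall x, X x -> P (ix x) x) /\ (forall i x, P i x -> ix x = i).
Proof.
  intros (Hsub & Hcov & Hdisj & _).
  assert (Hix : forall x, X x -> P (epsilon (inhabits i0) (fun i => P i x)) x)
    by (intros x Hx; apply epsilon_spec; auto).
  exists (fun x => epsilon (inhabits i0) (fun i => P i x)). split; [exact Hix |].
  intros i x Hi. apply (Hdisj _ _ x); [apply Hix, (Hsub i x Hi) | exact Hi].
Qed.

Lemma continuous_on_glue {I} X (P : I -> cantor -> Prop) (ix : cantor -> I)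
    (f : I -> cantor -> cantor) :
  clopen_partition X P -> (forall x, X x -> P (ix x) x) -> (forall i x, P i x -> ix x = i) ->
  (forall i, continuous_on (P i) (f i)) -> continuous_on X (fun x => f (ix x) x).
Proof.
  intros (_ & _ & _ & Hopen) Hix Hix' Hf x Hx m.
  destruct (Hopen (ix x) x (Hix x Hx)) as [n1 Hn1].
  destruct (Hf (ix x) x (Hix x Hx) m) as [n2 Hn2].
  exists (max n1 n2). intros y Hy Hxy.
  assert (Hpy : P (ix x) y)
    by (apply Hn1; [exact Hy | apply (agree_weaken (max n1 n2)); [lia | exact Hxy]]).
  rewrite (Hix' _ _ Hpy).
  apply Hn2; [exact Hpy | apply (agree_weaken (max n1 n2)); [lia | exact Hxy]].
Qed.

Lemma homeomorphic_glue {I} (i0 : I) X Y (PX PY : I -> cantor -> Prop) :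
  clopen_partition X PX -> clopen_partition Y PY ->
  (forall i, homeomorphic (PX i) (PY i)) -> homeomorphic X Y.
Proof.
  intros HX HY Hh.
  destruct (homeomorphic_choice I PX PY Hh) as (f & g & Hfg).
  destruct (partition_index i0 X PX HX) as (ix & Hix & Hix').
  destruct (partition_index i0 Y PY HY) as (iy & Hiy & Hiy').
  assert (Hf : forall x, X x -> PY (ix x) (f (ix x) x)) by (intros x Hx; apply Hfg; auto).
  assert (Hg : forall y, Y y -> PX (iy y) (g (iy y) y)) by (intros y Hy; apply Hfg; auto).
  exists (fun x => f (ix x) x), (fun y => g (iy y) y). repeat split.
  - intros x Hx. apply (proj1 HY (ix x)). auto.
  - intros y Hy. apply (proj1 HX (iy y)). auto.
  - intros x Hx. rewrite (Hiy' _ _ (Hf x Hx)). apply Hfg. auto.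
  - intros y Hy. rewrite (Hix' _ _ (Hg y Hy)). apply Hfg. auto.
  - apply (continuous_on_glue X PX); auto. apply Hfg.
  - apply (continuous_on_glue Y PY); auto. apply Hfg.
Qed.

Lemma split_off_clopen_copy X V (P : nat -> cantor -> Prop) :
  clopen_partition X P -> (forall k, homeomorphic X (P k)) -> clopen_in X V ->
  exists V', clopen_in X V' /\ homeomorphic V V' /\
             homeomorphic (fun x => X x /\ ~ V' x) X.
Proof.
  intros HP Hcopy HV.
  destruct (homeomorphic_choice nat (fun _ => X) P Hcopy) as (f & g & Hfg).
  set (Q := fun k (b : bool) =>
        if b then fun y => P k y /\ V (g k y) else fun y => P k y /\ ~ V (g k y)).
  assert (HQ : clopen_partition X (fun kb => Q (fst kb) (snd kb))).
  { apply (clopen_partition_refine X P Q HP). intros k.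
    apply clopen_partition_bool; [exact (clopen_in_preimage _ _ _ _ _ (Hfg k) HV) | tauto]. }
  assert (HVQ : forall k, homeomorphic V (Q k true))
    by (intro k; exists (f k), (g k); exact (is_homeo_restrict _ _ _ _ _ (Hfg k) (proj1 HV))).
  (* Hilbert hotel: the copy of V inside P (S k) replaces the one inside P k. *)
  set (sigma := fun kb : nat * bool =>
        let (k, b) := kb in if b then (S k, true) else (k, false)).
  exists (Q 0 true). split; [| split].
  - exact (clopen_partition_piece X _ (0, true) HQ).
  - apply HVQ.
  - apply (homeomorphic_glue (0, true) _ _ (fun j => Q (fst (sigma j)) (snd (sigma j)))
             (fun kb => Q (fst kb) (snd kb))); [| exact HQ |].
    + apply (clopen_partition_remove X (fun kb => Q (fst kb) (snd kb)) (0, true) sigma HQ).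
      * intros [k [|]] [k' [|]]; simpl; congruence.
      * intros [[|k] [|]] Hne; [congruence | exists (0, false) | exists (k, true)
                                | exists (S k, false)]; reflexivity.
      * intros [k [|]]; simpl; congruence.
    + intros [k [|]]; simpl.
      * exact (homeomorphic_trans _ _ _ (homeomorphic_sym _ _ (HVQ (S k))) (HVQ k)).
      * apply homeomorphic_refl.
Qed.

(** * Cylinders of a filter are homeomorphic to the filter *)

Definition index_of (e : nat -> nat) (n : nat) : option nat :=
  match excluded_middle_informative (exists j, e j = n) with
  | left H => Some (proj1_sig (constructive_indefinite_description _ H))
  | right _ => None
  end.

Lemma index_of_spec e n :
  (exists j, index_of e n = Some j /\ e j = n) \/ (index_of e n = None /\ forall j, e j <> n).
Proof.
  unfold index_of. destruct (excluded_middle_informative _) as [H | H].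
  - left. destruct (constructive_indefinite_description _ H) as [j Hj]. eauto.
  - right. split; [reflexivity |]. intros j Hj. apply H. eauto.
Qed.

Section ShiftAlong.

Variables (e : nat -> nat) (m : nat).
Hypothesis e_increasing : forall j, e j < e (S j).
Hypothesis e_fixes_prefix : forall j, j < m -> e j = j.

Lemma increasing_lt a b : a < b -> e a < e b.
Proof.
  intros Hab. induction Hab as [| b _ IH]; [apply e_increasing |].
  specialize (e_increasing b). lia.
Qed.

Lemma increasing_le a b : a <= b -> e a <= e b.
Proof.
  intros Hab. destruct (Nat.eq_dec a b) as [-> | Hne]; [lia |].
  apply Nat.lt_le_incl, increasing_lt. lia.
Qed.

Lemma increasing_ge_id j : j <= e j.
Proof. induction j; [lia | specialize (e_increasing j); lia]. Qed.

Lemma index_of_image j : index_of e (e j) = Some j.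
Proof.
  destruct (index_of_spec e (e j)) as [(k & -> & Hk) | (_ & H)]; [| now destruct (H j)].
  f_equal. destruct (Nat.lt_trichotomy k j) as [h | [h | h]]; auto;
    apply increasing_lt in h; lia.
Qed.

(* Along the increasing enumeration e, shift the values m places up, filling
   the first m places with zeros; off the range of e nothing changes. *)
Definition shift_up (x : cantor) : cantor := fun n =>
  match index_of e n with
  | Some j => if j <? m then false else x (e (j - m))
  | None => x n
  end.

Definition shift_down (y : cantor) : cantor := fun n =>
  match index_of e n with
  | Some j => y (e (j + m))
  | None => y n
  end.

Lemma shift_up_off_range x n : (forall j, e j <> n) -> shift_up x n = x n.
Proof.
  intros H. unfold shift_up. destruct (index_of_spec e n) as [(j & _ & Hj) | (-> & _)];
  [now destruct (H j) | reflexivity].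
Qed.

Lemma shift_down_off_range y n : (forall j, e j <> n) -> shift_down y n = y n.
Proof.
  intros H. unfold shift_down. destruct (index_of_spec e n) as [(j & _ & Hj) | (-> & _)];
  [now destruct (H j) | reflexivity].
Qed.

Lemma shift_is_homeo X :
  (forall x, X x -> X (shift_up x)) -> (forall y, X y -> X (shift_down y)) ->
  is_homeo X (cylinder X m (fun _ => false)) shift_up shift_down.
Proof.
  intros Hup Hdown. split; [| split; [| split; [| split; [| split]]]].
  - intros x Hx. split; [auto |]. intros i Hi. unfold shift_up.
    rewrite <- (e_fixes_prefix i Hi) at 1. rewrite index_of_image.
    destruct (Nat.ltb_spec i m); [reflexivity | lia].
  - intros y [Hy _]. auto.
  - intros x _ n. unfold shift_down.
    destruct (index_of_spec e n) as [(j & Hj & <-) | (Hj & _)]; rewrite Hj;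
      unfold shift_up; [rewrite index_of_image | now rewrite Hj].
    destruct (Nat.ltb_spec (j + m) m); [lia |]. now replace (j + m - m) with j by lia.
  - intros y [_ Hy] n. unfold shift_up.
    destruct (index_of_spec e n) as [(j & Hj & <-) | (Hj & _)]; rewrite Hj;
      unfold shift_down; [| now rewrite Hj].
    destruct (Nat.ltb_spec j m).
    + rewrite (e_fixes_prefix j) by assumption. auto.
    + rewrite index_of_image. now replace (j - m + m) with j by lia.
  - intros x _ k. exists k. intros y _ Hxy i Hi. unfold shift_up.
    destruct (index_of_spec e i) as [(j & -> & <-) | (-> & _)]; [| auto].
    destruct (j <? m); [reflexivity |]. apply Hxy.
    pose proof (increasing_le (j - m) j ltac:(lia)). lia.
  - intros y _ k. exists (S (e (k + m))). intros z _ Hyz i Hi. unfold shift_down.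
    pose proof (increasing_ge_id (k + m)).
    destruct (index_of_spec e i) as [(j & -> & <-) | (-> & _)]; apply Hyz; [| lia].
    pose proof (increasing_ge_id j). pose proof (increasing_lt (j + m) (k + m) ltac:(lia)). lia.
Qed.

End ShiftAlong.

Lemma coinfinite_enumeration (A : cantor) (m : nat) :
  (forall N, exists n, N <= n /\ A n = false) ->
  exists e : nat -> nat, (forall j, e j < e (S j)) /\ (forall j, j < m -> e j = j) /\
                         (forall j, m <= j -> A (e j) = false).
Proof.
  intros Hinf.
  set (next := fun N => proj1_sig (constructive_indefinite_description _ (Hinf N))).
  assert (Hnext : forall N, N <= next N /\ A (next N) = false)
    by (intro N; exact (proj2_sig (constructive_indefinite_description _ (Hinf N)))).
  set (e := fix e j := match j with
                       | 0 => if 0 <? m then 0 else next 0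
                       | S j' => if S j' <? m then S j' else next (S (e j'))
                       end).
  assert (He : forall j,
             e j = if j <? m then j else next (match j with 0 => 0 | S j' => S (e j') end))
    by (intros [|j]; reflexivity).
  exists e. split; [| split].
  - intros j. rewrite (He (S j)). destruct (Nat.ltb_spec (S j) m).
    + rewrite He. destruct (Nat.ltb_spec j m); lia.
    + specialize (Hnext (S (e j))). lia.
  - intros j Hj. rewrite He. destruct (Nat.ltb_spec j m); [reflexivity | lia].
  - intros j Hj. rewrite He. destruct (Nat.ltb_spec j m); [lia | apply Hnext].
Qed.

Lemma filter_cofinite F x : is_filter F ->
  (exists N, forall n, N <= n -> x n = true) -> F x.
Proof.
  intros (_ & Htop & Hfin & _) [N HN]. apply (Hfin (fun _ => true) x Htop).
  exists N. intros n Hn. symmetry. auto.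
Qed.

Lemma filter_agree_on F A x y : is_filter F -> F A -> F x ->
  (forall n, A n = true -> x n = y n) -> F y.
Proof.
  intros (_ & _ & _ & Hup & Hmeet) HA Hx H.
  apply (Hup (fun n => x n && A n)); [now apply Hmeet |].
  intros n Hn. apply andb_prop in Hn as [H1 H2]. rewrite <- H; auto.
Qed.

Lemma filter_has_one F x : is_filter F -> F x -> exists n, x n = true.
Proof.
  intros (Hbot & _ & Hfin & _) Hx. apply NNPP. intros Hno. apply Hbot.
  apply (Hfin x); [exact Hx |]. exists 0. intros n _.
  destruct (x n) eqn:E; [destruct Hno; eauto | reflexivity].
Qed.

Lemma zero_cylinder_homeomorphic_coinfinite F m A : is_filter F -> F A ->
  (forall N, exists n, N <= n /\ A n = false) ->
  homeomorphic F (cylinder F m (fun _ => false)).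
Proof.
  intros HF HA Hinf.
  destruct (coinfinite_enumeration A m Hinf) as (e & He & Hfix & Hout).
  set (A' := fun n => (m <=? n) && A n).
  assert (HA' : F A').
  { apply (proj1 (proj2 (proj2 HF)) A); [exact HA |]. exists m. intros n Hn.
    unfold A'. destruct (Nat.leb_spec m n); [reflexivity | lia]. }
  assert (Hoff : forall n, A' n = true -> forall j, e j <> n).
  { intros n Hn j <-. apply andb_prop in Hn as [Hm HAe]. apply Nat.leb_le in Hm.
    destruct (Nat.ltb_spec j m).
    - rewrite Hfix in Hm by assumption. lia.
    - rewrite Hout in HAe by assumption. discriminate. }
  exists (shift_up e m), (shift_down e m). apply shift_is_homeo; auto.
  - intros x Hx. apply (filter_agree_on F A' x); auto.
    intros n Hn. symmetry. exact (shift_up_off_range e m x n (Hoff n Hn)).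
  - intros y Hy. apply (filter_agree_on F A' y); auto.
    intros n Hn. symmetry. exact (shift_down_off_range e m y n (Hoff n Hn)).
Qed.

Lemma zero_cylinder_homeomorphic_cofinite F m : is_filter F ->
  (forall x, F x -> exists N, forall n, N <= n -> x n = true) ->
  homeomorphic F (cylinder F m (fun _ => false)).
Proof.
  intros HF Hcof.
  assert (Hid : forall j, j < S j) by (intro; lia).
  exists (shift_up (fun j => j) m), (shift_down (fun j => j) m).
  apply shift_is_homeo; auto.
  - intros x Hx. destruct (Hcof x Hx) as [N HN]. apply filter_cofinite; [exact HF |].
    exists (N + m). intros n Hn. unfold shift_up.
    rewrite (index_of_image (fun j => j) Hid n).
    destruct (Nat.ltb_spec n m); [lia |]. apply HN. lia.
  - intros y Hy. destruct (Hcof y Hy) as [N HN]. apply filter_cofinite; [exact HF |].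
    exists N. intros n Hn. unfold shift_down.
    rewrite (index_of_image (fun j => j) Hid n). apply HN. lia.
Qed.

Lemma zero_cylinder_homeomorphic F m : is_filter F ->
  homeomorphic F (cylinder F m (fun _ => false)).
Proof.
  intros HF.
  destruct (classic (exists A, F A /\ forall N, exists n, N <= n /\ A n = false))
    as [(A & HA & Hinf) | Hno_coinf].
  - exact (zero_cylinder_homeomorphic_coinfinite F m A HF HA Hinf).
  - apply (zero_cylinder_homeomorphic_cofinite F m HF).
    intros x Hx. apply NNPP. intros Hc. apply Hno_coinf. exists x. split; [exact Hx |].
    intros N. apply NNPP. intros Hc2. apply Hc. exists N. intros n Hn.
    destruct (x n) eqn:E; [reflexivity | destruct Hc2; eauto].
Qed.

Definition replace_prefix (n : nat) (s x : cantor) : cantor :=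
  fun i => if i <? n then s i else x i.

Lemma replace_prefix_is_homeo F n s t :
  (forall x y, F x -> fin_diff x y -> F y) ->
  is_homeo (cylinder F n t) (cylinder F n s) (replace_prefix n s) (replace_prefix n t).
Proof.
  intros Hfin.
  assert (Hmaps : forall u v x, cylinder F n u x -> cylinder F n v (replace_prefix n v x)).
  { intros u v x [Hx _]. split.
    - apply (Hfin x); [exact Hx |]. exists n. intros i Hi. unfold replace_prefix.
      destruct (Nat.ltb_spec i n); [lia | reflexivity].
    - intros i Hi. unfold replace_prefix. destruct (Nat.ltb_spec i n); [reflexivity | lia]. }
  assert (Hinv : forall u v x, cylinder F n u x ->
                 forall i, replace_prefix n u (replace_prefix n v x) i = x i).
  { intros u v x [_ Hux] i. unfold replace_prefix.
    destruct (Nat.ltb_spec i n); [auto | reflexivity]. }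
  assert (Hcont : forall u v, continuous_on (cylinder F n u) (replace_prefix n v)).
  { intros u v x _ k. exists k. intros y _ Hxy i Hi. unfold replace_prefix.
    destruct (i <? n); auto. }
  split; [| split; [| split; [| split; [| split]]]]; intros; eauto.
Qed.

Lemma cylinder_homeomorphic F n s : is_filter F -> homeomorphic F (cylinder F n s).
Proof.
  intros HF. apply (homeomorphic_trans _ (cylinder F n (fun _ => false))).
  - exact (zero_cylinder_homeomorphic F n HF).
  - exists (replace_prefix n s), (replace_prefix n (fun _ => false)).
    apply replace_prefix_is_homeo. apply HF.
Qed.

Lemma first_one_partition X : (forall x, X x -> exists n, x n = true) ->
  clopen_partition X (fun k => cylinder X (S k) (fun i => i =? k)).
Proof.
  intros Hone. split; [| split; [| split]].
  - intros k x [Hx _]. exact Hx.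
  - intros x Hx.
    destruct (ConstructiveEpsilon.epsilon_smallest (fun n => x n = true)
                (fun n => bool_dec (x n) true) (Hone x Hx)) as [k [Hk Hmin]].
    exists k. split; [exact Hx |]. intros i Hi.
    destruct (Nat.eqb_spec i k) as [-> | Hne]; [auto |].
    destruct (x i) eqn:E; [specialize (Hmin i E); lia | reflexivity].
  - intros k j x [_ Hk] [_ Hj].
    destruct (Nat.lt_trichotomy k j) as [h | [h | h]]; [| exact h |].
    + specialize (Hk k ltac:(lia)). specialize (Hj k ltac:(lia)).
      cbn beta in Hk, Hj. rewrite Nat.eqb_refl in Hk. rewrite <- Hk in Hj.
      now apply Nat.eqb_eq.
    + specialize (Hk j ltac:(lia)). specialize (Hj j ltac:(lia)).
      cbn beta in Hk, Hj. rewrite Nat.eqb_refl in Hj. rewrite <- Hj in Hk.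
      symmetry. now apply Nat.eqb_eq.
  - intros k. apply clopen_in_cylinder.
Qed.

Theorem proposition13p3 (F : cantor -> Prop) :
  is_filter F -> strongly_homogeneous F.
Proof.
  intros HF U HU [x0 Hx0].
  destruct (proj1 (proj2 HU) x0 Hx0) as [n0 HA_U].
  set (A := cylinder F n0 x0).
  assert (HAU : clopen_in U A)
    by (apply (clopen_in_restrict F);
        [intros x [Hx HxA]; auto | apply HU | apply clopen_in_cylinder]).
  set (V := fun x => U x /\ ~ A x).
  assert (HVU : clopen_in U V) by exact (clopen_in_compl U A HAU).
  destruct (split_off_clopen_copy F V _ (first_one_partition F (fun x => filter_has_one F x HF))
              (fun k => cylinder_homeomorphic F _ _ HF) (clopen_in_trans F U V HU HVU))
    as (V' & HV' & HVV' & HFV').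
  apply (homeomorphic_glue true U F (fun b : bool => if b then V else A)
           (fun b : bool => if b then V' else fun x => F x /\ ~ V' x)).
  - apply clopen_partition_bool; [exact HVU |].
    intros x. unfold V. split; [intros Hx; split; [apply HAU, Hx | tauto] |].
    intros [Hx HnV]. apply NNPP. tauto.
  - apply clopen_partition_bool; [exact HV' | tauto].
  - intros [|]; [exact HVV' |].
    apply (homeomorphic_trans _ F);
      [apply homeomorphic_sym, cylinder_homeomorphic, HF | apply homeomorphic_sym, HFV'].
Qed.
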